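(* Let $V$ be a real vector space of dimension $2n$ with basis $e_1,\dots,e_{2n}$ and symplectic form $\omega=e_{12}+e_{34}+\dots+e_{2n-1,2n}$ (where $e_{ij}=e_i\wedge e_j$). Then every primitive element $\mu_k\in P\bigwedge^kV$ can be written as $$\mu_k=e_1\wedge\beta_1+e_2\wedge\beta_2+\Big(e_{12}-\tfrac{1}{n-k+1}\sum_{j=2}^n e_{2j-1,2j}\Big)\wedge\beta_3+\beta_4,$$ where $\beta_1,\beta_2\in P\bigwedge^{k-1}V$, $\beta_3\in P\bigwedge^{k-2}V$, $\beta_4\in P\bigwedge^kV$, and none of $\beta_1,\dots,\beta_4$ involves $e_1$ or $e_2$ (i.e. they lie in the exterior algebra of $\mathrm{span}\{e_3,\dots,e_{2n}\}$).
   Context: On $\bigwedge^\bullet V$, $L(\alpha)=\omega\wedge\alpha$, $\Lambda$ is contraction with the bivector $\omega^{-1}$ (adjoint-type operator with $[\Lambda,L]=H$), and $H$ acts on $\bigwedge^kV$ as multiplication by $n-k$. An element $\mu\in\bigwedge^kV$ ($k\le n$) is primitive if $\Lambda\mu=0$; $P\bigwedge^kV$ is the space of primitive elements. The coefficient $\frac{1}{n-k+1}$ is what the paper writes as the operator $\frac{1}{H+1}$ applied to the resulting degree-$k$ element. *)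

(* Exterior algebra of V = R^(2n) modelled concretely:
   an element of /\^* V is a finite function assigning to each subset S of
   the (0-indexed) basis indices 'I_m the coefficient of e_S
   (e_S = e_{s1} /\ ... /\ e_{sr} with s1 < ... < sr). *)
From HB Require Import structures.
From mathcomp Require Import all_boot all_order all_algebra.
Set Implicit Arguments. Unset Strict Implicit. Unset Printing Implicit Defensive.
Import Order.TTheory GRing.Theory Num.Theory.
Local Open Scope ring_scope.

Definition extform (R : nzRingType) (m : nat) := {ffun {set 'I_m} -> R}.

Section Ext.
Variables (R : nzRingType) (m : nat).

(* sign of e_S /\ e_T = sgn S T * e_(S u T) for disjoint S, T:
   (-1)^(number of inversions s > t with s in S, t in T) *)
Definition wsgn (S T : {set 'I_m}) : R :=
  (-1) ^+ #|[set p : 'I_m * 'I_m | [&& p.1 \in S, p.2 \in T & (p.2 < p.1)%N]]|.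

Definition wedge (a b : extform R m) : extform R m :=
  [ffun U => \sum_(S : {set 'I_m}) \sum_(T : {set 'I_m})
     if (S :|: T == U) && [disjoint S & T] then wsgn S T * a S * b T else 0].

(* basis vector e_i (0-indexed; zero if i >= m) *)
Definition ev (i : nat) : extform R m :=
  [ffun S => ((i < m)%N && (S == [set x : 'I_m | nat_of_ord x == i]))%:R].

(* interior product with the dual basis covector e_i^* (i a 0-indexed nat;
   zero if i >= m):  iota_i (e_i /\ e_U) = e_U  for i not in U *)
Definition contr (i : nat) (a : extform R m) : extform R m :=
  [ffun U : {set 'I_m} =>
     let I := [set x : 'I_m | nat_of_ord x == i] in
     if (i < m)%N && ~~ (I \subset U) then
       (-1) ^+ #|[set s in U | (s < i)%N]| * a (I :|: U)
     else 0].

Definition scal (c : R) (a : extform R m) : extform R m := [ffun S => c * a S].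

(* a is homogeneous of degree d (d an integer; negative degree forces a = 0) *)
Definition homog (d : int) (a : extform R m) : Prop :=
  forall S : {set 'I_m}, (#|S|%:Z != d) -> a S = 0.

(* a does not involve e_1, e_2 (0-indexed: e_0, e_1), i.e. a lies in the
   exterior algebra of span{e_3,...,e_2n} *)
Definition avoids12 (a : extform R m) : Prop :=
  forall S : {set 'I_m}, [exists x in S, (nat_of_ord x < 2)%N] -> a S = 0.

End Ext.

Section Sympl.
Variables (R : nzRingType) (n : nat).

Definition e2 (i j : nat) : extform R n.*2 := wedge (ev R n.*2 i) (ev R n.*2 j).

Definition omega : extform R n.*2 := \sum_(j < n) e2 (j.*2) (j.*2).+1.

Definition Lop (a : extform R n.*2) : extform R n.*2 := wedge omega a.

(* Lambda = contraction with the bivector omega^{-1}, the adjoint of L: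
   Lambda = sum_j iota_{2j} iota_{2j-1} (1-indexed; iota_{2j} applied last); one has [Lambda, L] = H
   with H = n - k on degree k. *)
Definition Lam (a : extform R n.*2) : extform R n.*2 :=
  \sum_(j < n) contr (j.*2).+1 (contr j.*2 a).

Definition primitive (k : int) (a : extform R n.*2) : Prop :=
  homog k a /\ Lam a = 0.

End Sympl.

From HB Require Import structures.
From mathcomp Require Import all_boot all_order all_algebra.
From mathcomp Require Import reals.
From mathcomp Require Import zify ring.
Set Implicit Arguments. Unset Strict Implicit. Unset Printing Implicit Defensive.
Import GRing.Theory Num.Theory.
Local Open Scope ring_scope.

(* Split a form by how its monomials meet {e1, e2}: a = e1 /\ b1 + e2 /\ b2 + e12 /\ b3 + g
   with b1, b2, b3, g free of e1, e2 ([strip F a] is the coefficient of e_F).  Contracting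
   along the first plane only sends e12 /\ b3 to b3, so for primitive a the forms b1, b2, b3
   are primitive while Lambda g = - b3.  On forms free of e1, e2, the relation [Lambda, L] = H
   for omega' = omega - e12 gives Lambda (omega' /\ b) = (n - 1 - deg b) b for primitive b;
   as b3 has degree k - 2, b4 = g + omega' /\ b3 / (n - k + 1) is primitive. *)

Section FinsetFacts.
Variable T : finType.
Implicit Types A B C : {set T}.

Lemma setUD_subset A B : A \subset B -> A :|: (B :\: A) = B.
Proof. by move=> sAB; rewrite setDE setUIr setUCr setIT; apply/setUidPr. Qed.

Lemma setUKD A B : [disjoint A & B] -> (A :|: B) :\: A = B.
Proof. by move=> dAB; rewrite setDUl setDv set0U; apply/setDidPl; rewrite disjoint_sym. Qed.

Lemma disjoint_setD A B : [disjoint A & B :\: A].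
Proof. by rewrite -setI_eq0 setDE setICA setICr setI0. Qed.

Lemma disjoint_setUr A B C : [disjoint A & B :|: C] = [disjoint A & B] && [disjoint A & C].
Proof. by rewrite -!setI_eq0 setIUr setU_eq0. Qed.

Lemma subset_disjointUr A B C : [disjoint A & B] -> (A \subset B :|: C) = (A \subset C).
Proof.
move=> dAB; apply/subsetP/subsetP => sA x xA; last by rewrite inE sA ?orbT.
by move: (sA x xA); rewrite inE (disjointFr dAB xA).
Qed.

Lemma setDUr_disjoint A B C : [disjoint A & B] -> (B :|: C) :\: A = B :|: (C :\: A).
Proof. by move=> dAB; rewrite setDUl; congr (_ :|: _); apply/setDidPl; rewrite disjoint_sym. Qed.

Lemma disjoint_setDr A B C : [disjoint A & B] -> [disjoint B & C :\: A] = [disjoint B & C].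
Proof.
move=> dAB; have sBA : B \subset ~: A by rewrite -disjoints_subset disjoint_sym.
by rewrite -!setI_eq0 setDE setICA (setIidPl sBA) setIC.
Qed.

Lemma disjoint_set2 (x y : T) A : [disjoint [set x; y] & A] = (x \notin A) && (y \notin A).
Proof. by rewrite -setI_eq0 setIUl setU_eq0 !setI_eq0 !disjoints1. Qed.

Lemma card_set1I (x : T) A : #|[set x] :&: A| = nat_of_bool (x \in A).
Proof.
case: (boolP (x \in A)) => xA; first by rewrite (setIidPl _) ?cards1 ?sub1set.
by rewrite disjoint_setI0 ?cards0 ?disjoints1.
Qed.

Lemma card_set2I (x y : T) A : x != y -> #|[set x; y] :&: A| = ((x \in A) + (y \in A))%N.
Proof.
move=> nxy; rewrite setIUl cardsU !card_set1I setIACA (_ : [set x] :&: [set y] = set0).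
  by rewrite set0I cards0 subn0.
by apply/eqP; rewrite setI_eq0 disjoints1 in_set1.
Qed.

End FinsetFacts.

Section WedgeBasis.
Variables (R : comNzRingType) (m : nat).
Local Notation form := (extform R m).
Implicit Types (a b x y : form) (E U : {set 'I_m}).

Definition ebasis E : form := [ffun S => (S == E)%:R].

Definition iset (i : nat) : {set 'I_m} := [set x : 'I_m | nat_of_ord x == i].

Lemma iset_ord i (lt_im : (i < m)%N) : iset i = [set Ordinal lt_im].
Proof. by apply/setP => x; rewrite !inE -val_eqE. Qed.

Lemma card_iset i : (i < m)%N -> #|iset i| = 1%N.
Proof. by move=> lt_im; rewrite (iset_ord lt_im) cards1. Qed.

Lemma ev_ebasis i : (i < m)%N -> ev R m i = ebasis (iset i).
Proof. by move=> lt_im; apply/ffunP => S; rewrite !ffunE lt_im. Qed.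

Lemma wedge_ebasisE E a U : wedge (ebasis E) a U =
  if E \subset U then wsgn R E (U :\: E) * a (U :\: E) else 0.
Proof.
rewrite ffunE (bigD1 E) //= [X in _ + X]big1 ?addr0 => [|S SE]; last first.
  by apply: big1 => T _; rewrite ffunE (negbTE SE) mulr0 mul0r; case: ifP.
under eq_bigr => T _ do rewrite ffunE eqxx mulr1.
case: ifP => sEU.
  rewrite (bigD1 (U :\: E)) //= setUD_subset // eqxx disjoint_setD /=.
  rewrite big1 ?addr0 // => T TU; case: ifP => // /andP[/eqP defU dET].
  by case/eqP: TU; rewrite -defU setUKD.
by apply: big1 => T _; case: ifP => // /andP[/eqP defU _]; move: sEU; rewrite -defU subsetUl.
Qed.

Lemma wsgn_eq1 E U : (forall s t, s \in E -> t \in U -> (s <= t)%N) -> wsgn R E U = 1.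
Proof.
move=> leEU; rewrite /wsgn (_ : [set p | _] = set0) ?cards0 //.
apply/setP => -[s t]; rewrite !inE /=; apply/negP => /and3P[sE tU].
by rewrite ltnNge leEU.
Qed.

Lemma wedgeDl x y b : wedge (x + y) b = wedge x b + wedge y b.
Proof.
apply/ffunP => U; rewrite !ffunE -big_split; apply: eq_bigr => S _.
rewrite -big_split; apply: eq_bigr => T _; rewrite !ffunE.
by case: ifP => _ /=; rewrite ?addr0 // mulrDr mulrDl.
Qed.

Lemma wedge0l b : wedge 0 b = 0.
Proof.
apply/ffunP => U; rewrite !ffunE big1 // => S _; rewrite big1 // => T _.
by rewrite !ffunE; case: ifP => _; rewrite ?mulr0 ?mul0r.
Qed.

Lemma wedgeBl x y b : wedge (x - y) b = wedge x b - wedge y b.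
Proof.
apply/ffunP => U; rewrite !ffunE -sumrB; apply: eq_bigr => S _.
rewrite -sumrB; apply: eq_bigr => T _; rewrite !ffunE.
by case: ifP => _; rewrite ?subr0 // mulrBr mulrBl.
Qed.

Lemma wedgeZl c x b : wedge (scal c x) b = scal c (wedge x b).
Proof.
apply/ffunP => U; rewrite !ffunE mulr_sumr; apply: eq_bigr => S _.
rewrite mulr_sumr; apply: eq_bigr => T _; rewrite !ffunE.
by case: ifP => _; rewrite ?mulr0 // !mulrA [_ * c]mulrC.
Qed.

Lemma wedge_suml (I : Type) (r : seq I) (P : pred I) (F : I -> form) b :
  wedge (\sum_(i <- r | P i) F i) b = \sum_(i <- r | P i) wedge (F i) b.
Proof. by apply: (big_morph (fun x => wedge x b)) => [x y|]; rewrite ?wedgeDl ?wedge0l. Qed.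

End WedgeBasis.

Lemma ltn_diff_halves s t : t./2 != s./2 -> (t < s)%N = (t < (s./2).*2)%N.
Proof.
move=> /eqP; have := odd_double_half s; have := odd_double_half t.
by rewrite -!muln2; case: (odd s); case: (odd t) => /= ? ? ?; apply/idP/idP => ?; lia.
Qed.

Section Planes.
Variables (R : comNzRingType) (n : nat).
Local Notation form := (extform R n.*2).
Implicit Types (a : form) (U W : {set 'I_n.*2}).

Definition plane (j : nat) : {set 'I_n.*2} := [set x : 'I_n.*2 | x./2 == j].

Lemma lt_double j : (j < n)%N -> (j.*2 < n.*2)%N.
Proof. by rewrite ltn_double. Qed.

Lemma lt_Sdouble j : (j < n)%N -> (j.*2.+1 < n.*2)%N.
Proof. by rewrite ltn_Sdouble. Qed.

Section OnePlane.
Variables (j : nat) (lt_jn : (j < n)%N).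
Local Notation x0 := (Ordinal (lt_double lt_jn)).
Local Notation x1 := (Ordinal (lt_Sdouble lt_jn)).

Lemma neq_plane_ord : x0 != x1.
Proof. by rewrite -val_eqE /= neq_ltn ltnSn. Qed.

Lemma planeE : plane j = [set x0; x1].
Proof.
apply/setP => x; rewrite !inE -!val_eqE /=; apply/eqP/orP => [<-|].
  by have := odd_double_half x; case: (odd x) => /= e; [right|left]; rewrite -{1}e.
by case=> /eqP -> /=; rewrite ?uphalf_double ?doubleK.
Qed.

Lemma card_plane : #|plane j| = 2.
Proof. by rewrite planeE cards2 neq_plane_ord. Qed.

Lemma e2_plane : e2 R n j.*2 j.*2.+1 = ebasis R (plane j).
Proof.
apply/ffunP => U; rewrite /e2 (ev_ebasis _ (lt_double lt_jn)) (ev_ebasis _ (lt_Sdouble lt_jn)).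
rewrite (iset_ord (lt_double lt_jn)) (iset_ord (lt_Sdouble lt_jn)) wedge_ebasisE !ffunE planeE.
case: (boolP (U == [set x0; x1])) => [/eqP ->|neU].
  rewrite sub1set setU11 setU1K ?in_set1 ?neq_plane_ord // eqxx mulr1 wsgn_eq1 // => s t.
  by rewrite !in_set1 => /eqP -> /eqP ->.
case: ifP => // x0U; rewrite (_ : (U :\: [set x0] == [set x1]) = false) ?mulr0 //.
apply/negbTE; apply: contra neU => /eqP U1.
by rewrite -(setD1K (_ : x0 \in U)) ?U1 // -sub1set.
Qed.

Lemma wsgn_plane W : [disjoint plane j & W] -> wsgn R (plane j) W = 1.
Proof.
move=> djW; rewrite /wsgn (_ : [set p | _] = setX (plane j) [set t in W | (t < j.*2)%N]).
  by rewrite cardsX card_plane mul2n -addnn exprD -expr2 sqrr_sign.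
apply/setP => -[s t]; rewrite !inE /=.
case: (boolP (t \in W)) => tW /=; last by rewrite andbF.
have := disjointFl djW tW; rewrite inE; case: (boolP (s./2 == j)) => // /eqP <- /negbT.
exact: ltn_diff_halves.
Qed.

Lemma wedge_e2_planeE a U : wedge (e2 R n j.*2 j.*2.+1) a U =
  if plane j \subset U then a (U :\: plane j) else 0.
Proof.
rewrite e2_plane wedge_ebasisE.
by case: ifP => // _; rewrite wsgn_plane ?mul1r // disjoint_setD.
Qed.

Lemma contr_planeE a W : contr j.*2.+1 (contr j.*2 a) W =
  if [disjoint plane j & W] then a (plane j :|: W) else 0.
Proof.
rewrite /contr !ffunE; cbv zeta.
rewrite (lt_double lt_jn) (lt_Sdouble lt_jn) -!/(iset _ _).
rewrite (iset_ord (lt_double lt_jn)) (iset_ord (lt_Sdouble lt_jn)).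
rewrite !sub1set planeE disjoint_set2 in_setU1 (negbTE neq_plane_ord) /=.
case: (boolP (x1 \in W)) => x1W /=; first by rewrite andbF.
case: (boolP (x0 \in W)) => x0W /=; first by rewrite mulr0.
rewrite -setUA mulrA (_ : [set s in W | (s < j.*2.+1)%N] = [set s in x1 |: W | (s < j.*2)%N]).
  by rewrite -expr2 sqrr_sign mul1r.
apply/setP => x; rewrite !inE; case: (boolP (x \in W)) => xW /=.
  have : x != x0 by apply: contraNneq x0W => <-.
  by rewrite orbT -val_eqE /= => neqx; rewrite ltnS leq_eqVlt (negbTE neqx).
by rewrite orbF; case: eqP => [->|] //=; rewrite ltnNge leqnSn.
Qed.

Lemma one_sub_card_planeI W : 1 - #|plane j :&: W|%:R =
  ([disjoint plane j & W] : nat)%:R - ((plane j \subset W) : nat)%:R :> R.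
Proof.
rewrite planeE card_set2I ?neq_plane_ord // disjoint_set2 subUset !sub1set natrD.
by case: (x0 \in W); case: (x1 \in W) => /=; ring.
Qed.

End OnePlane.

Lemma disjoint_plane i j : i != j -> [disjoint plane i & plane j].
Proof.
move=> nij; rewrite -setI_eq0; apply/eqP/setP => x; rewrite !inE.
by apply/negP => /andP[/eqP xi /eqP xj]; rewrite -xi -xj eqxx in nij.
Qed.

Lemma in_plane0 (x : 'I_n.*2) : (x \in plane 0) = (x < 2)%N.
Proof. by rewrite inE -[2%N]/(1.*2) -ltn_half_double ltnS leqn0. Qed.

Lemma sum_card_planeI W : (\sum_(i < n) #|plane i :&: W|)%N = #|W|.
Proof.
have half_lt (x : 'I_n.*2) : (x./2 < n)%N by rewrite ltn_half_double.
rewrite -sum1_card (partition_big (fun x : 'I_n.*2 => Ordinal (half_lt x)) xpredT) //=.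
apply: eq_bigr => i _; rewrite sum1dep_card; apply: eq_card => x.
by rewrite !inE -val_eqE /= andbC.
Qed.

Lemma LamE a W :
  Lam a W = \sum_(j < n) (if [disjoint plane j & W] then a (plane j :|: W) else 0).
Proof. by rewrite sum_ffunE; apply: eq_bigr => j _; rewrite contr_planeE. Qed.

Lemma LamD a b : Lam (a + b) = Lam a + Lam b.
Proof.
apply/ffunP => W; rewrite ffunE !LamE -big_split; apply: eq_bigr => j _.
by case: ifP => _ /=; rewrite ?ffunE ?addr0.
Qed.

Lemma Lam0 : Lam 0 = 0 :> form.
Proof.
apply/ffunP => W; rewrite LamE ffunE big1 // => j _.
by rewrite ffunE; case: ifP.
Qed.

Lemma LamZ c a : Lam (scal c a) = scal c (Lam a).
Proof.
apply/ffunP => W; rewrite [RHS]ffunE !LamE mulr_sumr; apply: eq_bigr => j _.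
by rewrite ffunE; case: ifP; rewrite ?mulr0.
Qed.

Lemma Lam_sum (I : Type) (r : seq I) (P : pred I) (F : I -> form) :
  Lam (\sum_(i <- r | P i) F i) = \sum_(i <- r | P i) Lam (F i).
Proof. exact: (big_morph _ LamD Lam0). Qed.

(* The i-th summand of [Lam, L] = H, evaluated on the kernel of Lam. *)
Lemma Lam_wedge_e2_plane i a W : (i < n)%N -> Lam a = 0 ->
  Lam (wedge (e2 R n i.*2 i.*2.+1) a) W = (1 - #|plane i :&: W|%:R) * a W.
Proof.
move=> lt_in La; rewrite one_sub_card_planeI // LamE.
under eq_bigr => j _ do rewrite wedge_e2_planeE //.
have dPP (j : 'I_n) : j != Ordinal lt_in -> [disjoint plane i & plane j].
  by move=> nji; apply: disjoint_plane; rewrite eq_sym -val_eqE in nji.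
rewrite (bigD1 (Ordinal lt_in)) //= subsetUl.
case: (boolP (plane i \subset W)) => sPW.
  have -> : [disjoint plane i & W] = false.
    by rewrite -setI_eq0 (setIidPl sPW) -cards_eq0 card_plane.
  rewrite /= add0r sub0r mulN1r.
  have := congr1 (fun f : form => f (W :\: plane i)) La.
  rewrite LamE ffunE (bigD1 (Ordinal lt_in)) //= disjoint_setD setUD_subset // => /eqP.
  rewrite addrC addr_eq0 => /eqP <-; apply: eq_bigr => j nji.
  by rewrite (subset_disjointUr _ (dPP j nji)) sPW (setDUr_disjoint _ (dPP j nji))
    (disjoint_setDr _ (dPP j nji)).
rewrite big1 => [|j nji]; last by rewrite (subset_disjointUr _ (dPP j nji)) (negbTE sPW) !if_same.
by rewrite addr0 subr0; case: ifP => dW; rewrite ?setUKD ?mul1r ?mul0r.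
Qed.

Definition omega' : form := \sum_(1 <= j < n) e2 R n j.*2 j.*2.+1.

Lemma wedge_omega'E a U : wedge omega' a U =
  \sum_(1 <= j < n) (if plane j \subset U then a (U :\: plane j) else 0).
Proof.
rewrite wedge_suml sum_ffunE; apply: eq_big_nat => j /andP[_ lt_jn].
exact: wedge_e2_planeE.
Qed.

Lemma homog_wedge_omega' d a : homog d a -> homog (d + 2) (wedge omega' a).
Proof.
move=> hom_a U hU; rewrite wedge_omega'E big_nat_cond big1 // => j /andP[/andP[_ lt_jn] _].
case: ifP => // sPU; apply: hom_a; apply: contra hU => /eqP cardD.
by rewrite -(cardsID (plane j) U) (setIidPr sPU) card_plane // PoszD cardD addrC.
Qed.

Lemma Lam_wedge_omega' a W : (0 < n)%N -> Lam a = 0 -> avoids12 a ->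
  Lam (wedge omega' a) W = (n%:R - 1 - #|W|%:R) * a W.
Proof.
move=> n_gt0 La av_a; rewrite wedge_suml Lam_sum sum_ffunE.
under eq_big_nat => i /andP[_ lt_in] do rewrite Lam_wedge_e2_plane //.
rewrite -mulr_suml; have [dW|] := boolP [disjoint plane 0 & W]; last first.
  rewrite -setI_eq0 => /set0Pn[x]; rewrite inE => /andP[xP xW].
  by rewrite av_a ?mulr0 //; apply/existsP; exists x; rewrite xW -in_plane0.
have sum_cardW : (\sum_(1 <= i < n) #|plane i :&: W|)%N = #|W|.
  rewrite -(sum_card_planeI W) -(big_mkord xpredT (fun i => #|plane i :&: W|)).
  by rewrite (big_ltn n_gt0) disjoint_setI0 // cards0.
by rewrite sumrB sumr_const_nat -natr_sum sum_cardW natrB.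
Qed.

End Planes.

Section Strip.
Variables (R : comNzRingType) (n : nat).
Local Notation form := (extform R n.*2).
Local Notation P0 := (plane n 0).
Implicit Types (a : form) (F U W : {set 'I_n.*2}).

Definition strip F a : form :=
  [ffun U : {set _} => if [disjoint P0 & U] then a (F :|: U) else 0].

Lemma iset_sub_plane0 i : (i < 2)%N -> iset n.*2 i \subset P0.
Proof. by move=> lt_i2; apply/subsetP => x; rewrite inE in_plane0 => /eqP ->. Qed.

Lemma avoids12_strip F a : avoids12 (strip F a).
Proof.
move=> S /existsP[x /andP[xS lt_x2]]; rewrite ffunE; case: ifP => // dS.
by rewrite (disjointFr dS) ?in_plane0 in xS.
Qed.

Lemma avoids12_wedge_omega' a : avoids12 a -> avoids12 (wedge (omega' R n) a).
Proof.
move=> av_a S /existsP[x /andP[xS lt_x2]].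
rewrite wedge_omega'E big_nat_cond big1 // => j /andP[/andP[lt0j _] _].
have /[!inE]/eqP half_x : x \in P0 by rewrite in_plane0.
case: ifP => // _; apply: av_a; apply/existsP; exists x.
by rewrite in_setD xS lt_x2 inE half_x eq_sym -lt0n lt0j.
Qed.

Lemma homog_strip F a d e : homog d a -> F \subset P0 -> d = e + #|F|%:Z -> homog e (strip F a).
Proof.
move=> hom_a sFP de S hS; rewrite ffunE; case: ifP => // dS; apply: hom_a.
rewrite cardsU disjoint_setI0 ?cards0 ?subn0; last exact: disjointWl sFP dS.
by apply: contra hS => /eqP cardFS; apply/eqP; lia.
Qed.

Lemma wedge_ebasis_strip F a : F \subset P0 -> wedge (ebasis R F) (strip F a) =
  [ffun U : {set _} => if (F \subset U) && [disjoint P0 & U :\: F] then a U else 0].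
Proof.
move=> sFP; apply/ffunP => U; rewrite wedge_ebasisE !ffunE.
case: (boolP (F \subset U)) => //= sFU.
case: ifP => dUF; last by rewrite mulr0.
rewrite setUD_subset // wsgn_eq1 ?mul1r // => s t sF tUF.
have := subsetP sFP s sF; have := disjointFl dUF tUF; rewrite !in_plane0 => /negbT; lia.
Qed.

Lemma avoids12_remainder c a :
  avoids12 (strip set0 a + scal c (wedge (omega' R n) (strip P0 a))).
Proof.
move=> S hS; rewrite [LHS]ffunE [scal _ _ _]ffunE.
by rewrite avoids12_strip // avoids12_wedge_omega' ?mulr0 ?addr0 //; apply: avoids12_strip.
Qed.

Hypothesis n_gt0 : (0 < n)%N.

Lemma Lam_stripE F a W : F \subset P0 -> Lam (strip F a) W =
  if [disjoint P0 & W] then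
    Lam a (F :|: W) - (if [disjoint P0 & F :|: W] then a (P0 :|: (F :|: W)) else 0)
  else 0.
Proof.
move=> sFP; rewrite !LamE; case: ifP => dW; last first.
  apply: big1 => j _; rewrite ffunE; case: ifP => // _; case: ifP => // dU.
  by rewrite disjoint_setUr dW andbF in dU.
have nP0 : [disjoint P0 & P0 :|: W] = false.
  by rewrite disjoint_setUr -setI_eq0 setIid -cards_eq0 card_plane.
rewrite (bigD1 (Ordinal n_gt0)) //= [in RHS](bigD1 (Ordinal n_gt0)) //= ffunE nP0 if_same add0r.
rewrite [X in X - _]addrC addrK; apply: eq_bigr => j nj0.
have dP0j : [disjoint P0 & plane n j] by apply: disjoint_plane; rewrite eq_sym -val_eqE in nj0.
have dFj : [disjoint plane n j & F] by apply: disjointWr sFP _; rewrite disjoint_sym.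
by rewrite ffunE !disjoint_setUr dP0j dW dFj setUCA.
Qed.

Lemma Lam_strip_eq0 F a : Lam a = 0 -> F \subset P0 -> (0 < #|F|)%N -> Lam (strip F a) = 0.
Proof.
move=> La sFP F_gt0; apply/ffunP => W; rewrite Lam_stripE // La !ffunE disjoint_setUr.
have -> : [disjoint P0 & F] = false.
  by rewrite -setI_eq0 (setIidPr sFP) -cards_eq0; apply/negbTE; rewrite -lt0n.
by case: ifP; rewrite ?subr0.
Qed.

Lemma Lam_strip0 a : Lam a = 0 -> Lam (strip set0 a) = - strip P0 a.
Proof.
move=> La; apply/ffunP => W; rewrite Lam_stripE ?sub0set // La !ffunE set0U.
by case: ifP => dW; rewrite ?dW ?oppr0 // sub0r.
Qed.

Lemma primitive_strip F a d e : primitive d a -> F \subset P0 -> (0 < #|F|)%N ->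
  d = e + #|F|%:Z -> primitive e (strip F a).
Proof.
move=> [hom_a La] sFP F_gt0 de.
by split; [exact: homog_strip hom_a sFP de | exact: Lam_strip_eq0].
Qed.

Lemma primitive_strip_iset i a d : primitive d a -> (i < 2)%N ->
  primitive (d - 1) (strip (iset n.*2 i) a).
Proof.
move=> prim_a lt_i2; have lt_in2 : (i < n.*2)%N.
  by apply: (leq_trans lt_i2); rewrite -muln2 leq_pmull.
by apply: (primitive_strip prim_a); rewrite ?iset_sub_plane0 ?card_iset ?subrK.
Qed.

Lemma primitive_strip_plane0 a d : primitive d a -> primitive (d - 2) (strip P0 a).
Proof. by move=> prim_a; apply: (primitive_strip prim_a); rewrite ?card_plane ?subrK. Qed.

Lemma strip_decomposition c a :
  a = wedge (ev R n.*2 0) (strip (iset n.*2 0) a) + wedge (ev R n.*2 1) (strip (iset n.*2 1) a)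
      + wedge (e2 R n 0 1 - scal c (omega' R n)) (strip P0 a)
      + (strip set0 a + scal c (wedge (omega' R n) (strip P0 a))).
Proof.
rewrite wedgeBl wedgeZl (e2_plane R n_gt0).
rewrite (ev_ebasis _ (lt_double n_gt0)) (ev_ebasis _ (lt_Sdouble n_gt0)).
rewrite !wedge_ebasis_strip ?iset_sub_plane0 //.
move: (wedge _ (strip P0 a)) => w.
apply/ffunP => U; rewrite !ffunE.
rewrite (iset_ord (lt_double n_gt0)) (iset_ord (lt_Sdouble n_gt0)) (planeE n_gt0).
set x0 := Ordinal _; set x1 := Ordinal _; have n01 : x0 != x1 := neq_plane_ord n_gt0.
rewrite set0U !sub1set subUset !sub1set !disjoint_set2 !in_setD1 !in_setD !in_set2 !eqxx.
rewrite (negbTE n01) [x1 == x0]eq_sym (negbTE n01) /=.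
by case: (x0 \in U); case: (x1 \in U) => /=; ring.
Qed.

End Strip.

Lemma primitive_remainder (R : numFieldType) (n k : nat) (a : extform R n.*2) :
  (0 < n)%N -> (k <= n)%N -> primitive k%:Z a ->
  primitive k%:Z
    (strip set0 a + scal ((n - k).+1%:R)^-1 (wedge (omega' R n) (strip (plane n 0) a))).
Proof.
move=> n_gt0 le_kn prim_a; have [hom_a La] := prim_a.
set b := strip (plane n 0) a.
have [hom_b La_b] : primitive (k%:Z - 2) b by apply: primitive_strip_plane0.
have av_b : avoids12 b := avoids12_strip _ a.
split.
  move=> S hS; rewrite [LHS]ffunE [scal _ _ _]ffunE.
  rewrite (homog_strip (e := k%:Z) hom_a (sub0set _)) ?cards0 ?addr0 // add0r.
  by rewrite (homog_wedge_omega' hom_b) ?subrK ?mulr0.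
apply/ffunP => W; rewrite LamD LamZ (Lam_strip0 n_gt0 La) [LHS]ffunE [scal _ _ _]ffunE.
rewrite (Lam_wedge_omega' _ n_gt0 La_b av_b) ffunE [RHS]ffunE.
(* b has degree k - 2, so Lam (omega' /\ b) = (n - k + 1) b cancels Lam (strip set0 a) = - b. *)
have [->|bW0] := eqVneq (b W) 0; first by rewrite oppr0 !mulr0 addr0.
have /eqP cardW : #|W|%:Z == k%:Z - 2 by apply: contraNT bW0 => /hom_b/eqP.
have -> : (n%:R - 1 - #|W|%:R : R) = (n - k).+1%:R.
  have -> : n%:R = ((n - k).+1 + 1 + #|W|)%N%:R :> R by congr (_%:R); lia.
  by rewrite !natrD; ring.
by rewrite mulrA mulVf ?mul1r ?addNr // pnatr_eq0.
Qed.

Theorem lemma2p3 (R : realType) (n k : nat) (mu : extform R n.*2) :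
  (0 < n)%N -> (k <= n)%N ->
  primitive k%:Z mu ->
  exists b1 b2 b3 b4 : extform R n.*2,
    [/\ primitive (k%:Z - 1) b1, primitive (k%:Z - 1) b2,
        primitive (k%:Z - 2) b3, primitive k%:Z b4
      & [/\ avoids12 b1, avoids12 b2, avoids12 b3, avoids12 b4 &
        mu = wedge (ev R n.*2 0) b1 + wedge (ev R n.*2 1) b2
             + wedge (e2 R n 0 1
                      - scal ((n - k).+1%:R)^-1 (\sum_(1 <= j < n) e2 R n j.*2 j.*2.+1))
                     b3
             + b4]].
Proof.
move=> n_gt0 le_kn prim_mu.
exists (strip (iset n.*2 0) mu), (strip (iset n.*2 1) mu), (strip (plane n 0) mu),
  (strip set0 mu + scal ((n - k).+1%:R)^-1 (wedge (omega' R n) (strip (plane n 0) mu))).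
split.
- exact: primitive_strip_iset.
- exact: primitive_strip_iset.
- exact: primitive_strip_plane0.
- exact: primitive_remainder.
- split; try exact: avoids12_strip.
  + exact: avoids12_remainder.
  + exact: strip_decomposition.
Qed.
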